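(* For every $k\in\mathbb{N}_+$ and $x\in(0,\infty)$: (1) $\mathcal{M}_{k,k}(x)\cdot\mathcal{M}_{k,k}\big(1/s(x)\big)=1$; (2) $\mathcal{M}_{k+1,k}(x)\cdot\mathcal{M}_{k+1,k}(x^{-1})=1$.
   Context: For $x>0$, $\omega=\sqrt{8x+1}$, $c(x)=\frac{(\omega+3)^2}{16}$, $d(x)=\frac{(\omega+3)^2}{8(\omega+1)}$, $s(x)=\frac{(\omega-1)^2}{4(\omega+7)}$; $s_0=\mathrm{id}$, $s_{-1}(x)=1/s(1/x)$, $s_i=s\circ s_{i-1}$, $s_{-i}=s_{-1}\circ s_{-(i-1)}$ ($i\in\mathbb{N}_+$); $c_j=c\circ s_j$, $d_j=d\circ s_j$. Product convention: $\prod_{i=0}^kh_i=h_0\cdots h_k$ for $k\ge0$, $=1$ for $k=-1$, $=h_{k+1}^{-1}\cdots h_{-1}^{-1}$ for $k\le-2$. Let $m^{\rm def}(x)$, $n^{\rm def}(x)$ be the sequences with $m^{\rm def}_{k+1}(x)-m^{\rm def}_k(x)=\prod_{i=0}^k(c_i(x)-1)$, $\lim_{k\to-\infty}m^{\rm def}_k(x)=0$, and $n^{\rm def}_k(x)-n^{\rm def}_{k+1}(x)=x\prod_{i=0}^k(d_i(x)-1)$, $\lim_{k\to\infty}n^{\rm def}_k(x)=0$ (these are the $m,n$ components of the unique positive ABMN solution with $m_{-\infty}=n_\infty=0$, $m_0-m_{-1}=1$ and central ratio $x$). For $p\in\mathbb{N}_+$, $r\in\mathbb{N}_+$, the finite-trail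 Mina margin map is $\mathcal{M}_{p,r}(x)=\frac{n^{\rm def}_{-p}(x)-n^{\rm def}_{r}(x)}{m^{\rm def}_{r}(x)-m^{\rm def}_{-p}(x)}$ (equivalently, this ratio for any ABMN solution on $\llbracket -p+1,r-1\rrbracket$ with central ratio $x$). *)

From Stdlib Require Import Reals ZArith Lia Lra.
Open Scope R_scope.

Definition omega (x : R) : R := sqrt (8 * x + 1).
Definition cf (x : R) : R := (omega x + 3) ^ 2 / 16.
Definition df (x : R) : R := (omega x + 3) ^ 2 / (8 * (omega x + 1)).
Definition sf (x : R) : R := (omega x - 1) ^ 2 / (4 * (omega x + 7)).

Definition sm1 (x : R) : R := / sf (/ x).

Fixpoint iterR (f : R -> R) (n : nat) (x : R) : R :=
  match n with O => x | S n' => f (iterR f n' x) end.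

Definition sZ (j : Z) (x : R) : R :=
  match j with
  | Z0 => x
  | Zpos p => iterR sf (Pos.to_nat p) x
  | Zneg p => iterR sm1 (Pos.to_nat p) x
  end.

Fixpoint prod_nat (f : nat -> R) (n : nat) : R :=
  match n with O => 1 | S n' => prod_nat f n' * f n' end.

(* Product convention of the paper:
   prod_{i=0}^k h_i = h_0 ... h_k          (k >= 0)
                    = 1                     (k = -1)
                    = h_{k+1}^{-1} ... h_{-1}^{-1}  (k <= -2) *)
Definition prodZ (h : Z -> R) (k : Z) : R :=
  if (0 <=? k)%Z
  then prod_nat (fun i => h (Z.of_nat i)) (S (Z.to_nat k))
  else prod_nat (fun i => / h (- Z.of_nat (S i))%Z) (Z.to_nat (- k - 1)).

Fixpoint sum_nat (f : nat -> R) (n : nat) : R :=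
  match n with O => 0 | S n' => sum_nat f n' + f n' end.
Definition sumZ (f : Z -> R) (a b : Z) : R :=
  if (a <=? b)%Z
  then sum_nat (fun t => f (a + Z.of_nat t)%Z) (Z.to_nat (b - a))
  else - sum_nat (fun t => f (b + Z.of_nat t)%Z) (Z.to_nat (a - b)).

(* increments: m_{k+1}-m_k = prod_{i=0}^k (c_i(x)-1),
               n_k - n_{k+1} = x prod_{i=0}^k (d_i(x)-1),
   with c_i = c o s_i, d_i = d o s_i *)
Definition mincr (x : R) (k : Z) : R := prodZ (fun i => cf (sZ i x) - 1) k.
Definition nincr (x : R) (k : Z) : R := x * prodZ (fun i => df (sZ i x) - 1) k.

(* A solution of the increment equations (normalized by m_0 = n_0 = 0).
   It differs from m^def, n^def only by additive constants, which cancel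
   in the margin map. *)
Definition mseq (x : R) (k : Z) : R := sumZ (mincr x) 0 k.
Definition nseq (x : R) (k : Z) : R := - sumZ (nincr x) 0 k.

Definition Mina (p r : nat) (x : R) : R :=
  (nseq x (- Z.of_nat p) - nseq x (Z.of_nat r))
  / (mseq x (Z.of_nat r) - mseq x (- Z.of_nat p)).

(* Since s(1/s(y)) = 1/y, the orbit of y' := 1/s(s_q(x)) is the orbit of x reversed:
   s_j(y') = 1/s(s_{q-j}(x)).  Moreover (d(y) - 1)(c(1/s(y)) - 1) = 1 = (c(y) - 1)(d(1/s(y)) - 1),
   so the m- and n-increments of y' are the n- and m-increments of x read backwards from q,
   rescaled.  The margin map is a ratio of window sums of increments, hence reflecting a window
   about q inverts it up to the factor y' (n_q - n_{q+1}) / (m_{q+1} - m_q).  This factor is 1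
   for q = 0 because s(x) (c(x) - 1) = x (d(x) - 1), and for q = -1 because then y' = 1/x. *)
From Pilot Require Import Defs.
From Stdlib Require Import Reals ZArith Lia Lra.
Open Scope R_scope.

Lemma omega_gt1 y : 0 < y -> 1 < omega y.
Proof. intros. unfold omega. rewrite <- sqrt_1 at 1. apply sqrt_lt_1_alt. lra. Qed.

Lemma omega_sqr y : 0 <= y -> omega y ^ 2 = 8 * y + 1.
Proof. intros. unfold omega. simpl. rewrite Rmult_1_r. apply sqrt_sqrt. lra. Qed.

Lemma eq_omega_sqr y : 0 <= y -> y = (omega y ^ 2 - 1) / 8.
Proof. intros. rewrite omega_sqr by lra. field. Qed.

Lemma omega_inv_sf y : 0 < y -> omega (/ sf y) = (omega y + 15) / (omega y - 1).
Proof.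
  intros Hy. pose proof (omega_gt1 y Hy) as Hw.
  change (omega (/ sf y)) with (sqrt (8 * / sf y + 1)).
  replace (8 * / sf y + 1) with (((omega y + 15) / (omega y - 1)) ^ 2).
  - apply sqrt_pow2. left. apply Rdiv_lt_0_compat; lra.
  - unfold sf. set (w := omega y) in *. field. split; lra.
Qed.

Lemma sf_gt0 y : 0 < y -> 0 < sf y.
Proof. intros. pose proof (omega_gt1 y H). unfold sf. apply Rdiv_lt_0_compat; nra. Qed.

Lemma cf_sub1_gt0 y : 0 < y -> 0 < cf y - 1.
Proof.
  intros H. pose proof (omega_gt1 y H). unfold cf. set (w := omega y) in *.
  replace ((w + 3) ^ 2 / 16 - 1) with ((w - 1) * (w + 7) / 16) by field.
  apply Rdiv_lt_0_compat; nra.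
Qed.

Lemma df_sub1_gt0 y : 0 < y -> 0 < df y - 1.
Proof.
  intros H. pose proof (omega_gt1 y H). unfold df. set (w := omega y) in *.
  replace ((w + 3) ^ 2 / (8 * (w + 1)) - 1) with ((w - 1) ^ 2 / (8 * (w + 1))) by (field; lra).
  apply Rdiv_lt_0_compat; nra.
Qed.

Lemma sf_mul_cf_sub1 y : 0 < y -> sf y * (cf y - 1) = y * (df y - 1).
Proof.
  intros H. pose proof (omega_gt1 y H). pose proof (eq_omega_sqr y ltac:(lra)).
  unfold sf, cf, df. set (w := omega y) in *. clearbody w. subst y.
  field. split; lra.
Qed.

Lemma sf_inv_sf y : 0 < y -> sf (/ sf y) = / y.
Proof.
  intros H. pose proof (omega_gt1 y H). pose proof (eq_omega_sqr y ltac:(lra)).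
  unfold sf at 1. rewrite omega_inv_sf by auto.
  set (w := omega y) in *. clearbody w. subst y.
  field. repeat split; try lra; nra.
Qed.

Lemma df_sub1_mul_cf_inv_sf y : 0 < y -> (df y - 1) * (cf (/ sf y) - 1) = 1.
Proof.
  intros H. pose proof (omega_gt1 y H).
  unfold cf. rewrite omega_inv_sf by auto. unfold df.
  set (w := omega y) in *. clearbody w.
  field. repeat split; try lra; nra.
Qed.

Lemma cf_sub1_mul_df_inv_sf y : 0 < y -> (cf y - 1) * (df (/ sf y) - 1) = 1.
Proof.
  intros H. pose proof (omega_gt1 y H).
  unfold df. rewrite omega_inv_sf by auto. unfold cf.
  set (w := omega y) in *. clearbody w.
  field. repeat split; try lra; nra.
Qed.

Lemma sm1_gt0 y : 0 < y -> 0 < sm1 y.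
Proof. intros. apply Rinv_0_lt_compat, sf_gt0, Rinv_0_lt_compat; auto. Qed.

Lemma sf_sm1 y : 0 < y -> sf (sm1 y) = y.
Proof. intros. unfold sm1. rewrite sf_inv_sf by (apply Rinv_0_lt_compat; auto). apply Rinv_inv. Qed.

Lemma sm1_sf y : 0 < y -> sm1 (sf y) = y.
Proof. intros. unfold sm1. rewrite sf_inv_sf by auto. apply Rinv_inv. Qed.

Lemma Z_nat_or_negS (k : Z) : exists n, k = Z.of_nat n \/ k = (- Z.of_nat (S n))%Z.
Proof.
  destruct (Z_le_gt_dec 0 k).
  - exists (Z.to_nat k). left. lia.
  - exists (Z.to_nat (- k - 1)). right. lia.
Qed.

Lemma iterR_gt0 f n x : (forall y, 0 < y -> 0 < f y) -> 0 < x -> 0 < iterR f n x.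
Proof. intros Hf Hx. induction n; simpl; auto. Qed.

Lemma sZ_gt0 k x : 0 < x -> 0 < sZ k x.
Proof. intros. destruct k; simpl; auto; apply iterR_gt0; auto using sf_gt0, sm1_gt0. Qed.

Lemma sZ_nat n x : sZ (Z.of_nat n) x = iterR sf n x.
Proof. destruct n; simpl; auto. rewrite SuccNat2Pos.id_succ. reflexivity. Qed.

Lemma sZ_negnat n x : sZ (- Z.of_nat n) x = iterR sm1 n x.
Proof. destruct n; simpl; auto. rewrite SuccNat2Pos.id_succ. reflexivity. Qed.

Lemma sZ_succ k x : 0 < x -> sZ (k + 1) x = sf (sZ k x).
Proof.
  intros Hx. destruct (Z_nat_or_negS k) as [n [-> | ->]].
  - replace (Z.of_nat n + 1)%Z with (Z.of_nat (S n)) by lia. rewrite !sZ_nat. reflexivity.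
  - replace (- Z.of_nat (S n) + 1)%Z with (- Z.of_nat n)%Z by lia.
    rewrite !sZ_negnat. simpl. rewrite sf_sm1; auto using iterR_gt0, sm1_gt0.
Qed.

Lemma sZ_pred k x : 0 < x -> sZ k x = sm1 (sZ (k + 1) x).
Proof. intros. rewrite sZ_succ, sm1_sf; auto using sZ_gt0. Qed.

Lemma Zseq_eq_rec (F G : R -> R) (u v : Z -> R) :
  u 0%Z = v 0%Z ->
  (forall j, u (j + 1)%Z = F (u j)) -> (forall j, v (j + 1)%Z = F (v j)) ->
  (forall j, u j = G (u (j + 1)%Z)) -> (forall j, v j = G (v (j + 1)%Z)) ->
  forall j, u j = v j.
Proof.
  intros H0 Fu Fv Gu Gv.
  assert (Hn : forall n : nat, u (Z.of_nat n) = v (Z.of_nat n) /\ u (- Z.of_nat n)%Z = v (- Z.of_nat n)%Z).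
  { induction n as [|n [IHpos IHneg]]; [simpl; auto|]. split.
    - replace (Z.of_nat (S n)) with (Z.of_nat n + 1)%Z by lia. rewrite Fu, Fv, IHpos. reflexivity.
    - rewrite (Gu (- Z.of_nat (S n))%Z), (Gv (- Z.of_nat (S n))%Z).
      replace (- Z.of_nat (S n) + 1)%Z with (- Z.of_nat n)%Z by lia. rewrite IHneg. reflexivity. }
  intros j. destruct (Z_nat_or_negS j) as [n [-> | ->]]; apply Hn.
Qed.

Lemma sZ_reflect x q : 0 < x -> forall j, sZ j (/ sf (sZ q x)) = / sf (sZ (q - j) x).
Proof.
  intros Hx.
  assert (Hx' : 0 < / sf (sZ q x)) by auto using Rinv_0_lt_compat, sf_gt0, sZ_gt0.
  assert (Hstep : forall j, sZ (q - j) x = sf (sZ (q - (j + 1)) x)).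
  { intros j. rewrite <- sZ_succ by auto. f_equal. lia. }
  apply (Zseq_eq_rec sf sm1); intros.
  - simpl. rewrite Z.sub_0_r. reflexivity.
  - apply sZ_succ; auto.
  - rewrite sf_inv_sf, (Hstep j) by auto using sZ_gt0. reflexivity.
  - apply sZ_pred; auto.
  - unfold sm1. rewrite Rinv_inv, (Hstep j). reflexivity.
Qed.

Lemma mul_rec_proportional (a f g : Z -> R) (j0 : Z) :
  (forall j, a j <> 0) ->
  (forall j, f j = f (j - 1)%Z * a j) -> (forall j, g j = g (j - 1)%Z * a j) ->
  forall j, f j * g j0 = f j0 * g j.
Proof.
  intros Ha Hf Hg.
  set (h := fun j => f j * g j0 - f j0 * g j).
  assert (Hh : forall j, h j = h (j - 1)%Z * a j).
  { intros j. unfold h. rewrite (Hf j), (Hg j). ring. }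
  assert (Hn : forall n : nat, h (j0 + Z.of_nat n)%Z = 0 /\ h (j0 - Z.of_nat n)%Z = 0).
  { induction n as [|n [IHup IHdown]].
    - rewrite Z.add_0_r, Z.sub_0_r. unfold h. split; ring.
    - split.
      + rewrite Hh. replace (j0 + Z.of_nat (S n) - 1)%Z with (j0 + Z.of_nat n)%Z by lia.
        rewrite IHup. ring.
      + rewrite Hh in IHdown.
        replace (j0 - Z.of_nat n - 1)%Z with (j0 - Z.of_nat (S n))%Z in IHdown by lia.
        destruct (Rmult_integral _ _ IHdown) as [E|E]; [exact E | exfalso; exact (Ha _ E)]. }
  intros j. enough (h j = 0) by (unfold h in *; lra).
  destruct (Z_le_gt_dec j0 j).
  - replace j with (j0 + Z.of_nat (Z.to_nat (j - j0)))%Z by lia. apply Hn.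
  - replace j with (j0 - Z.of_nat (Z.to_nat (j0 - j)))%Z by lia. apply Hn.
Qed.

Lemma prod_nat_gt0 f n : (forall i, 0 < f i) -> 0 < prod_nat f n.
Proof. intros. induction n; simpl; [lra|]. apply Rmult_lt_0_compat; auto. Qed.

Lemma prodZ_gt0 h k : (forall i, 0 < h i) -> 0 < prodZ h k.
Proof.
  intros. unfold prodZ. destruct (0 <=? k)%Z; apply prod_nat_gt0; auto using Rinv_0_lt_compat.
Qed.

Lemma prodZ_m1 h : prodZ h (-1) = 1.
Proof. reflexivity. Qed.

Lemma prodZ_rec h k : h k <> 0 -> prodZ h k = prodZ h (k - 1)%Z * h k.
Proof.
  intros Hk. destruct (Z_nat_or_negS k) as [n [-> | ->]].
  - destruct n as [|m].
    + unfold prodZ. simpl. ring.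
    + replace (Z.of_nat (S m) - 1)%Z with (Z.of_nat m) by lia.
      unfold prodZ. rewrite !(proj2 (Z.leb_le _ _)) by lia. rewrite !Nat2Z.id. reflexivity.
  - unfold prodZ. rewrite !(proj2 (Z.leb_gt _ _)) by lia.
    replace (Z.to_nat (- - Z.of_nat (S n) - 1)) with n by lia.
    replace (Z.to_nat (- (- Z.of_nat (S n) - 1) - 1)) with (S n) by lia.
    change (prod_nat (fun i => / h (- Z.of_nat (S i))%Z) (S n)) with
      (prod_nat (fun i => / h (- Z.of_nat (S i))%Z) n * / h (- Z.of_nat (S n))%Z).
    field. auto.
Qed.

Lemma prodZ_reflect (h h' : Z -> R) (q : Z) :
  (forall j, h' j * h (q - j)%Z = 1) ->
  forall j, prodZ h' j * prodZ h q = prodZ h (q - j - 1)%Z.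
Proof.
  intros Hinv j.
  assert (Hh' : forall j, h' j <> 0) by (intros i E; specialize (Hinv i); rewrite E in Hinv; lra).
  assert (Hh : forall j, h (q - j)%Z <> 0) by (intros i E; specialize (Hinv i); rewrite E in Hinv; lra).
  pose proof (mul_rec_proportional h' (prodZ h') (fun j => prodZ h (q - j - 1)) (-1) Hh') as P.
  simpl in P. replace (q - -1 - 1)%Z with q in P by lia.
  rewrite P, prodZ_m1; [ring | intros; apply prodZ_rec; auto |].
  intros i. replace (q - (i - 1) - 1)%Z with (q - i)%Z by lia.
  rewrite (prodZ_rec h (q - i)) by auto.
  rewrite Rmult_assoc, (Rmult_comm (h _)), Hinv. ring.
Qed.

(* [Reals] exports its own [sum_nat], which shadows the one of [Defs]. *)
Lemma sum_nat_ext (f g : nat -> R) (n : nat) :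
  (forall t, (t < n)%nat -> f t = g t) -> Defs.sum_nat f n = Defs.sum_nat g n.
Proof. intros H. induction n; simpl; auto. rewrite IHn, H; auto. Qed.

Lemma sum_nat_add (f : nat -> R) (m n : nat) :
  Defs.sum_nat f (m + n) = Defs.sum_nat f m + Defs.sum_nat (fun t => f (m + t)%nat) n.
Proof.
  induction n; simpl.
  - rewrite Nat.add_0_r. ring.
  - rewrite Nat.add_succ_r. simpl. rewrite IHn. ring.
Qed.

Lemma sum_nat_shift (f : nat -> R) (n : nat) :
  Defs.sum_nat f (S n) = f 0%nat + Defs.sum_nat (fun t => f (S t)) n.
Proof.
  induction n as [|n IH]; [simpl; ring|].
  change (Defs.sum_nat f (S (S n))) with (Defs.sum_nat f (S n) + f (S n)). rewrite IH. simpl. ring.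
Qed.

Lemma sum_nat_rev (f : nat -> R) (n : nat) :
  Defs.sum_nat f n = Defs.sum_nat (fun t => f (n - 1 - t)%nat) n.
Proof.
  induction n as [|n IH]; [reflexivity|].
  rewrite (sum_nat_shift (fun t => f (S n - 1 - t)%nat)).
  change (Defs.sum_nat f (S n)) with (Defs.sum_nat f n + f n).
  rewrite IH, Nat.sub_0_r. simpl (S n - 1)%nat. rewrite Nat.sub_0_r, Rplus_comm. f_equal.
  apply sum_nat_ext. intros. f_equal. lia.
Qed.

Lemma sum_nat_scale (c : R) (f : nat -> R) (n : nat) :
  Defs.sum_nat (fun t => c * f t) n = c * Defs.sum_nat f n.
Proof. induction n; simpl; [ring|]. rewrite IHn. ring. Qed.

Lemma sum_nat_gt0 (f : nat -> R) (n : nat) :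
  (forall t, 0 < f t) -> (0 < n)%nat -> 0 < Defs.sum_nat f n.
Proof.
  intros H Hn. induction n as [|[|n] IH]; [lia| |]; simpl in *.
  - specialize (H 0%nat). lra.
  - specialize (IH ltac:(lia)). specialize (H (S n)). lra.
Qed.

Definition window_sum (f : Z -> R) (p r : nat) : R :=
  Defs.sum_nat (fun t => f (- Z.of_nat p + Z.of_nat t)%Z) (p + r).

Lemma window_sum_gt0 (f : Z -> R) (p r : nat) :
  (forall j, 0 < f j) -> (0 < p + r)%nat -> 0 < window_sum f p r.
Proof. intros. apply sum_nat_gt0; auto. Qed.

Lemma sumZ_sub_window (f : Z -> R) (p r : nat) :
  sumZ f 0 (Z.of_nat r) - sumZ f 0 (- Z.of_nat p) = window_sum f p r.
Proof.
  assert (Er : sumZ f 0 (Z.of_nat r) = Defs.sum_nat (fun t => f (Z.of_nat t)) r).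
  { unfold sumZ. rewrite (proj2 (Z.leb_le 0 _)) by lia.
    replace (Z.to_nat (Z.of_nat r - 0)) with r by lia.
    apply sum_nat_ext; intros; f_equal; lia. }
  assert (Ep : sumZ f 0 (- Z.of_nat p)
               = - Defs.sum_nat (fun t => f (- Z.of_nat p + Z.of_nat t)%Z) p).
  { unfold sumZ. destruct p as [|p]; [simpl; ring|].
    rewrite (proj2 (Z.leb_gt _ _)) by lia.
    replace (Z.to_nat (0 - - Z.of_nat (S p))) with (S p) by lia. reflexivity. }
  unfold window_sum. rewrite sum_nat_add, Er, Ep.
  enough (Defs.sum_nat (fun t => f (Z.of_nat t)) r =
          Defs.sum_nat (fun t => f (- Z.of_nat p + Z.of_nat (p + t))%Z) r) by lra.
  apply sum_nat_ext; intros; f_equal; lia.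
Qed.

Lemma Mina_window p r x : Mina p r x = window_sum (nincr x) p r / window_sum (mincr x) p r.
Proof.
  unfold Mina, mseq, nseq. rewrite <- (sumZ_sub_window (mincr x)), <- (sumZ_sub_window (nincr x)).
  unfold Rdiv. f_equal. ring.
Qed.

(* The reflection j |-> -j-1-e maps the window [-(p+e), r-1] onto [-(r+e), p-1]. *)
Lemma window_sum_reflect (f g : Z -> R) (c : R) (e p r : nat) :
  (forall j, f j = c * g (- j - 1 - Z.of_nat e)%Z) ->
  window_sum f (p + e) r = c * window_sum g (r + e) p.
Proof.
  intros Hfg. unfold window_sum. rewrite sum_nat_rev, <- sum_nat_scale.
  replace (r + e + p)%nat with (p + e + r)%nat by lia.
  apply sum_nat_ext; intros t Ht. rewrite Hfg. do 2 f_equal. lia.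
Qed.

Lemma mincr_gt0 x k : 0 < x -> 0 < mincr x k.
Proof. intros. apply prodZ_gt0. intros. apply cf_sub1_gt0, sZ_gt0; auto. Qed.

Lemma nincr_gt0 x k : 0 < x -> 0 < nincr x k.
Proof.
  intros. apply Rmult_lt_0_compat; auto. apply prodZ_gt0. intros. apply df_sub1_gt0, sZ_gt0; auto.
Qed.

Lemma mincr_0 x : mincr x 0 = cf x - 1.
Proof. unfold mincr, prodZ. simpl. ring. Qed.

Lemma nincr_0 x : nincr x 0 = x * (df x - 1).
Proof. unfold nincr, prodZ. simpl. ring. Qed.

Lemma mincr_m1 x : mincr x (-1) = 1.
Proof. reflexivity. Qed.

Lemma nincr_m1 x : nincr x (-1) = x.
Proof. unfold nincr. rewrite prodZ_m1. ring. Qed.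

Lemma mincr_reflect x q j : 0 < x ->
  mincr (/ sf (sZ q x)) j * nincr x q = nincr x (q - j - 1).
Proof.
  intros Hx. unfold mincr, nincr.
  rewrite <- (prodZ_reflect (fun i => df (sZ i x) - 1) (fun i => cf (sZ i (/ sf (sZ q x))) - 1) q);
    [ring|].
  intros i. rewrite sZ_reflect, Rmult_comm by auto.
  apply df_sub1_mul_cf_inv_sf, sZ_gt0; auto.
Qed.

Lemma nincr_reflect x q j : 0 < x ->
  nincr (/ sf (sZ q x)) j * mincr x q = / sf (sZ q x) * mincr x (q - j - 1).
Proof.
  intros Hx. unfold mincr, nincr.
  rewrite <- (prodZ_reflect (fun i => cf (sZ i x) - 1) (fun i => df (sZ i (/ sf (sZ q x))) - 1) q);
    [ring|].
  intros i. rewrite sZ_reflect, Rmult_comm by auto.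
  apply cf_sub1_mul_df_inv_sf, sZ_gt0; auto.
Qed.

Lemma Mina_mul_reflect x (e p r : nat) : 0 < x -> (0 < p + r + e)%nat ->
  let q := (- Z.of_nat e)%Z in
  let x' := / sf (sZ q x) in
  Mina (p + e) r x' * Mina (r + e) p x = x' * nincr x q / mincr x q.
Proof.
  intros Hx Hpre q x'.
  assert (Hx' : 0 < x') by (apply Rinv_0_lt_compat, sf_gt0, sZ_gt0, Hx).
  pose proof (mincr_gt0 x q Hx). pose proof (nincr_gt0 x q Hx).
  assert (Hm : forall j, mincr x' j = / nincr x q * nincr x (- j - 1 - Z.of_nat e)%Z).
  { intros j. replace (- j - 1 - Z.of_nat e)%Z with (q - j - 1)%Z by lia.
    unfold x'. rewrite <- mincr_reflect by auto. field. lra. }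
  assert (Hn : forall j, nincr x' j = x' / mincr x q * mincr x (- j - 1 - Z.of_nat e)%Z).
  { intros j. replace (- j - 1 - Z.of_nat e)%Z with (q - j - 1)%Z by lia.
    transitivity (/ mincr x q * (x' * mincr x (q - j - 1)%Z)); [|unfold Rdiv; ring].
    unfold x'. rewrite <- nincr_reflect by auto. field. lra. }
  assert (Wm : 0 < window_sum (mincr x) (r + e) p) by (apply window_sum_gt0; auto using mincr_gt0; lia).
  assert (Wn : 0 < window_sum (nincr x) (r + e) p) by (apply window_sum_gt0; auto using nincr_gt0; lia).
  rewrite !Mina_window, (window_sum_reflect _ _ _ e p r Hm), (window_sum_reflect _ _ _ e p r Hn).
  field. repeat split; lra.
Qed.

Theorem mainTheorem18 :
  forall (k : nat), (1 <= k)%nat ->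
  forall x : R, 0 < x ->
    Mina k k x * Mina k k (/ sf x) = 1 /\
    Mina (k + 1) k x * Mina (k + 1) k (/ x) = 1.
Proof.
  intros k Hk x Hx. split.
  - pose proof (Mina_mul_reflect x 0 k k Hx ltac:(lia)) as H. simpl in H.
    rewrite Nat.add_0_r, mincr_0, nincr_0 in H.
    rewrite Rmult_comm, H, <- sf_mul_cf_sub1 by auto.
    pose proof (sf_gt0 x Hx). pose proof (cf_sub1_gt0 x Hx). field. lra.
  - pose proof (Mina_mul_reflect x 1 k k Hx ltac:(lia)) as H. simpl in H.
    rewrite sf_sm1, mincr_m1, nincr_m1 in H by auto.
    rewrite Rmult_comm, H. field. lra.
Qed.
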